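(* Let $A$ be a finite skew brace, $k$ a field, and $(V,\beta,\rho)$ an irreducible representation of $A$ over $k$. Then the group representation $(V,\beta)$ of $(A,\cdot)$ is completely reducible (i.e. $V$ is semisimple as a $k(A,\cdot)$-module).
   Context: A skew brace is a set $A$ with two group operations $\cdot$ and $\circ$ such that $a\circ(b\cdot c)=(a\circ b)\cdot a^{-1}\cdot(a\circ c)$ for all $a,b,c\in A$; here $a^{-1}$ is the inverse in $(A,\cdot)$. For $a\in A$ let $\lambda^{\mathrm{op}}_a(b)=(a\circ b)\cdot a^{-1}$. A representation of $A$ over $k$ is a triple $(V,\beta,\rho)$ with $V$ a $k$-vector space, $\beta:(A,\cdot)\to\mathrm{GL}(V)$, $\rho:(A,\circ)\to\mathrm{GL}(V)$ group homomorphisms such that $\beta(\lambda^{\mathrm{op}}_a(b))=\rho(a)\beta(b)\rho(a)^{-1}$ for all $a,b\in A$. It is irreducible if $V\ne 0$ and the only subspaces of $V$ invariant under all $\beta(a)$ and all $\rho(b)$ ($a,b\in A$) are $0$ and $V$. *)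

From HB Require Import structures.
From mathcomp Require Import all_boot all_order all_algebra all_fingroup.
From mathcomp Require Import mxrepresentation.
Set Implicit Arguments. Unset Strict Implicit. Unset Printing Implicit Defensive.
Import GRing.Theory.
Local Open Scope ring_scope.

(* A finite skew brace: the additive group (A, .) is the finGroupType A
   (multiplication [*], inverse [^-1]); the second operation [circ] makes A a
   group and satisfies the skew brace compatibility law. *)
Definition is_group_op (A : Type) (circ : A -> A -> A) : Prop :=
  associative circ /\
  exists e : A, left_id e circ /\ right_id e circ /\
    (forall a, exists b, circ a b = e /\ circ b a = e).

Definition is_skew_brace (A : finGroupType) (circ : A -> A -> A) : Prop :=
  is_group_op circ /\
  forall a b c : A, circ a (b * c)%g = (circ a b * a^-1 * circ a c)%g.

Definition lambda_op (A : finGroupType) (circ : A -> A -> A) (a b : A) : A :=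
  (circ a b * a^-1)%g.

Definition circ_repr (k : fieldType) (A : finGroupType) (circ : A -> A -> A)
  (n : nat) (rho : A -> 'M[k]_n) : Prop :=
  (forall a, rho a \in unitmx) /\
  (forall a b, rho (circ a b) = rho a *m rho b).

(* (V, beta, rho) with V = k^n (row vectors), beta a representation of (A,.) *)
Definition skew_brace_repr (k : fieldType) (A : finGroupType)
  (circ : A -> A -> A) (n : nat)
  (beta : mx_representation k [set: A] n) (rho : A -> 'M[k]_n) : Prop :=
  circ_repr circ rho /\
  forall a b : A, beta (lambda_op circ a b) = rho a *m beta b *m invmx (rho a).

(* Irreducible: V <> 0 and the only subspaces invariant under all beta a and
   all rho b are 0 and V. Subspaces are row spaces of square matrices. *)
Definition skew_brace_irr (k : fieldType) (A : finGroupType) (n : nat)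
  (beta : mx_representation k [set: A] n) (rho : A -> 'M[k]_n) : Prop :=
  (0 < n)%N /\
  forall U : 'M[k]_n,
    (forall a : A, stablemx U (beta a)) ->
    (forall b : A, stablemx U (rho b)) ->
    (U == (0 : 'M[k]_n))%MS \/ (U == (1%:M : 'M[k]_n))%MS.

From HB Require Import structures.
From mathcomp Require Import all_boot all_order all_algebra all_fingroup.
From mathcomp Require Import mxrepresentation zify.
From Stdlib Require Import Classical ClassicalEpsilon.
Set Implicit Arguments. Unset Strict Implicit. Unset Printing Implicit Defensive.
Import GRing.Theory.
Local Open Scope ring_scope.

(* Every rho(a) normalises the image of beta, since
   rho(a) beta(b) rho(a)^-1 = beta(lambda^op_a b); hence right multiplication
   by rho(a) permutes the simple beta-submodules of V. The beta-socle of V,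
   realised as a semisimple submodule of maximal rank, is therefore stable
   under beta and rho, it is nonzero, and by irreducibility it is all of V.
   Only the group structure of (A, circ) is used, not the brace law. *)

Section NormalizingMatrices.
Variables (F : fieldType) (gT : finGroupType) (G : {group gT}) (n : nat).
Variable rG : mx_representation F G n.

Definition mx_normalizes_repr (P : 'M[F]_n) :=
  forall x, x \in G -> exists2 y, y \in G & P *m rG x = rG y *m P.

Lemma mxmodule_mulmx_normalizing m P (U : 'M_(m, n)) :
  mx_normalizes_repr P -> mxmodule rG U -> mxmodule rG (U *m P).
Proof.
move=> normP /mxmoduleP modU; apply/mxmoduleP => x Gx.
have [y Gy E] := normP x Gx.
by rewrite -mulmxA E mulmxA submxMr // modU.
Qed.

Lemma mxsimple_mulmx_normalizing P (M : 'M_n) :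
    P \in unitmx -> mx_normalizes_repr P -> mx_normalizes_repr (invmx P) ->
  mxsimple rG M -> mxsimple rG (M *m P).
Proof.
move=> uP normP normPV [modM nzM simM]; split.
- exact: mxmodule_mulmx_normalizing.
- by rewrite mulmx_free_eq0 // row_free_unit.
move=> U modU sUMP nzU.
have sMUP : (M <= U *m invmx P)%MS.
  apply: simM; first exact: mxmodule_mulmx_normalizing.
    by rewrite -(mulmxK uP M) submxMr.
  by rewrite mulmx_free_eq0 // row_free_unit unitmx_inv.
by rewrite -(mulmxKV uP U) submxMr.
Qed.

Lemma mxsemisimple_mulmx_normalizing P (V : 'M_n) :
    P \in unitmx -> mx_normalizes_repr P -> mx_normalizes_repr (invmx P) ->
  mxsemisimple rG V -> mxsemisimple rG (V *m P).
Proof.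
move=> uP normP normPV [I W /= simW defV _].
have defVP : (\sum_i W i *m P :=: V *m P)%MS.
  exact: eqmx_trans (eqmx_sym (sumsmxMr _ _ _)) (eqmxMr P defV).
apply: (intro_mxsemisimple defVP) => i _ _.
exact: mxsimple_mulmx_normalizing.
Qed.

Lemma exists_rank_max_mxsemisimple :
  exists2 S, inhabited (mxsemisimple rG S) &
    forall T, mxsemisimple rG T -> (\rank T <= \rank S)%N.
Proof.
suff ex_max d S : mxsemisimple rG S -> (n - \rank S <= d)%N ->
    exists2 S, inhabited (mxsemisimple rG S) &
      forall T, mxsemisimple rG T -> (\rank T <= \rank S)%N.
  exact: (ex_max n 0 (mxsemisimple0 rG) (leq_subr _ _)).
elim: d S => [|d IHd] S ssS leSd.
  exists S; first by constructor.
  by move=> T _; have := rank_leq_col T; lia.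
have [[T [[ssT] ltST]] | noT] :=
  classic (exists T, inhabited (mxsemisimple rG T) /\ (\rank S < \rank T)%N).
  by apply: (IHd T ssT); lia.
exists S; first by constructor.
move=> T ssT; rewrite leqNgt; apply/negP => ltST.
by apply: noT; exists T; split; first constructor.
Qed.

Lemma rank_max_mxsemisimple_sub (S T : 'M_n) :
    mxsemisimple rG S ->
    (forall U, mxsemisimple rG U -> (\rank U <= \rank S)%N) ->
  mxsemisimple rG T -> (T <= S)%MS.
Proof.
move=> ssS maxS ssT.
have : (S + T <= S)%MS.
  rewrite -(mxrank_leqif_sup (addsmxSl S T)) eqn_leq mxrankS ?addsmxSl //.
  exact/maxS/addsmx_semisimple.
by rewrite addsmx_sub => /andP[].
Qed.

End NormalizingMatrices.

Section SkewBraceRepresentation.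
Variables (A : finGroupType) (circ : A -> A -> A) (k : fieldType) (n : nat).
Variables (beta : mx_representation k [set: A] n) (rho : A -> 'M[k]_n).
Hypothesis circ_group : is_group_op circ.
Hypothesis repr : skew_brace_repr circ beta rho.

Lemma skew_brace_repr_unit x : rho x \in unitmx.
Proof. by case: repr => [[]]. Qed.

Lemma skew_brace_repr_invmx x : exists y, rho y = invmx (rho x).
Proof.
have [_ [e [e_left [_ circ_inv]]]] := circ_group.
have [[rho_unit rho_mul] _] := repr.
have rho_e : rho e = 1%:M.
  by rewrite -[rho e](mulKmx (rho_unit e)) -rho_mul e_left mulVmx.
have [y [xy_e _]] := circ_inv x; exists y.
by rewrite -[rho y](mulKmx (rho_unit x)) -rho_mul xy_e rho_e mulmx1.
Qed.

Lemma skew_brace_repr_normalizes x : mx_normalizes_repr beta (rho x).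
Proof.
move=> c _; exists (lambda_op circ x c); first by rewrite inE.
by case: repr => _ ->; rewrite mulmxKV // skew_brace_repr_unit.
Qed.

Lemma skew_brace_repr_normalizes_invmx x :
  mx_normalizes_repr beta (invmx (rho x)).
Proof.
by have [y <-] := skew_brace_repr_invmx x; apply: skew_brace_repr_normalizes.
Qed.

Lemma mxsemisimple_mulmx_rho x V :
  mxsemisimple beta V -> mxsemisimple beta (V *m rho x).
Proof.
apply: mxsemisimple_mulmx_normalizing; first exact: skew_brace_repr_unit.
  exact: skew_brace_repr_normalizes.
exact: skew_brace_repr_normalizes_invmx.
Qed.

End SkewBraceRepresentation.

Theorem proposition3p3 (A : finGroupType) (circ : A -> A -> A)
  (k : fieldType) (n : nat)
  (beta : mx_representation k [set: A] n) (rho : A -> 'M[k]_n) :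
  is_skew_brace circ ->
  skew_brace_repr circ beta rho ->
  skew_brace_irr beta rho ->
  mx_completely_reducible beta 1%:M.
Proof.
move=> [circ_group _] repr [n_gt0 irr].
suff ss1 : inhabited (mxsemisimple beta 1%:M).
  exact: mxsemisimple_reducible (epsilon ss1 (fun _ => True)).
have [S [ssS] maxS] := exists_rank_max_mxsemisimple beta.
have socleS T : mxsemisimple beta T -> (T <= S)%MS.
  exact: rank_max_mxsemisimple_sub.
have beta_stable a : stablemx S (beta a).
  by apply: (mxmoduleP (mxsemisimple_module ssS)); rewrite inE.
have rho_stable b : stablemx S (rho b).
  exact: socleS (mxsemisimple_mulmx_rho circ_group repr b ssS).
have nzS : S != 0.
  have nz1 : (1%:M : 'M[k]_n) != 0 by rewrite -mxrank_eq0 mxrank1 -lt0n.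
  apply: (mxsimple_exists (mxmodule1 beta) nz1) => -[V simV _].
  apply: contraTneq (socleS V (mxsimple_semisimple simV)) => ->.
  by rewrite submx0; case: simV.
have [/eqmxP S0 | /eqmxP S1] := irr S beta_stable rho_stable.
  by move: nzS; rewrite -submx0 S0 sub0mx.
by constructor; apply: eqmx_semisimple S1 ssS.
Qed.
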